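(* Let $S\subset\mathbb{R}^d$ be a nonempty compact convex set with diameter $D:=\sup_{x,y\in S}\|x-y\|$, and let $f$ be differentiable on $S$ with $L$-Lipschitz gradient on $S$. Let $G:=\sup_{x\in S}\|\nabla f(x)\|<\infty$ and fix $C\ge\max\{LD^2,\,GD\}$ with $C>0$. Let $\delta\ge0$ and suppose that for every $x\in S$ a vector $g_\delta(x)\in\mathbb{R}^d$ is available with \[ \big|\langle \nabla f(x)-g_\delta(x),\,s-x\rangle\big|\le\delta\,\|\nabla f(x)\|\quad\text{for all } s\in S. \] Let $\tilde{\mathcal G}(x):=\max_{s\in S}\langle g_\delta(x),\,x-s\rangle$. Given $x^0\in S$, define iterates for $k=0,1,2,\dots$ by choosing $s^k\in\arg\min_{s\in S}\langle g_\delta(x^k),\,s-x^k\rangle$, setting \[ \overline\alpha_k:=\frac{\big(\tilde{\mathcal G}(x^k)-\delta\|\nabla f(x^k)\|\big)_+}{C},\qquad x^{k+1}:=x^k+\overline\alpha_k(s^k-x^k), \] where $(u)_+:=\max\{u,0\}$. Then for every $k\ge0$, \[ f(x^{k+1})\le f(x^k)-\frac{\big(\tilde{\mathcal G}(x^k)-\delta\|\nabla f(x^k)\|\big)_+^2}{2C}. \]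
   Context: $\|\cdot\|$ is the Euclidean norm and $\langle\cdot,\cdot\rangle$ the Euclidean inner product. $f$ need not be convex. *)

From HB Require Import structures.
From mathcomp Require Import all_boot all_order all_algebra.
From mathcomp Require Import all_classical all_reals all_analysis.
Set Implicit Arguments. Unset Strict Implicit. Unset Printing Implicit Defensive.
Import Order.TTheory GRing.Theory Num.Theory.
Import numFieldNormedType.Exports.
Local Open Scope classical_set_scope.
Local Open Scope ring_scope.

(* Euclidean inner product and Euclidean norm on R^d = 'rV[R]_d.
   (The library's canonical norm on matrices is the max norm, so we
   define the Euclidean ones explicitly.) *)
Definition edot {R : realType} {d : nat} (u v : 'rV[R]_d) : R :=
  \sum_(i < d) u ord0 i * v ord0 i.

Definition enorm {R : realType} {d : nat} (u : 'rV[R]_d) : R :=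
  Num.sqrt (edot u u).

Definition convex_in {R : realType} {d : nat} (S : set 'rV[R]_d) : Prop :=
  forall x y (t : R), S x -> S y -> 0 <= t -> t <= 1 ->
    S (t *: x + (1 - t) *: y).

Definition diam {R : realType} {d : nat} (S : set 'rV[R]_d) : R :=
  sup [set enorm (x - y) | x in S & y in S].

Definition pospart {R : realType} (u : R) : R := Num.max u 0.

(* With [v = s - x], the inexactness bound turns the computed gap into a slope
   estimate [<grad f(x), v> <= -(gap - delta |grad f(x)|)], and the descent lemma
   (mean value theorem plus Lipschitz gradient and Cauchy-Schwarz) bounds [f] on
   the segment by a quadratic of curvature [L |v|^2 <= L D^2 <= C].  The step
   [alpha = (gap - delta |grad f(x)|)_+ / C] minimises that model; it lies in
   [0, 1] because [gap - delta |grad f(x)| <= |grad f(x)| D <= G D <= C], so the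
   iterate stays in [S] by convexity, and the model value is the claimed bound. *)

From HB Require Import structures.
From mathcomp Require Import all_boot all_order all_algebra.
From mathcomp Require Import all_classical all_reals all_analysis.
From mathcomp Require Import ring lra.
Import Order.TTheory GRing.Theory Num.Theory.
Import numFieldNormedType.Exports.
Local Open Scope classical_set_scope.
Local Open Scope ring_scope.
Set Implicit Arguments. Unset Strict Implicit. Unset Printing Implicit Defensive.

Section EuclideanGeometry.
Variables (R : realType) (d : nat).
Implicit Types (a : R) (u v w : 'rV[R]_d).

Lemma edotC u v : edot u v = edot v u.
Proof. by apply: eq_bigr => i _; rewrite mulrC. Qed.

Lemma edotBl u w v : edot (u - w) v = edot u v - edot w v.
Proof. by rewrite /edot -sumrB; apply: eq_bigr => i _; rewrite !mxE mulrBl. Qed.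

Lemma edotZr a u v : edot u (a *: v) = a * edot u v.
Proof. by rewrite /edot mulr_sumr; apply: eq_bigr => i _; rewrite !mxE mulrCA. Qed.

Lemma edotZl a u v : edot (a *: u) v = a * edot u v.
Proof. by rewrite edotC edotZr edotC. Qed.

Lemma edotNr u v : edot u (- v) = - edot u v.
Proof. by rewrite -scaleN1r edotZr mulN1r. Qed.

Lemma edot_ge0 u : 0 <= edot u u.
Proof. by apply: sumr_ge0 => i _; rewrite -expr2 sqr_ge0. Qed.

Lemma enorm_ge0 u : 0 <= enorm u.
Proof. exact: sqrtr_ge0. Qed.

Lemma enorm_sqr u : enorm u ^+ 2 = edot u u.
Proof. by rewrite sqr_sqrtr // edot_ge0. Qed.

Lemma enormZ a u : enorm (a *: u) = `|a| * enorm u.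
Proof.
by rewrite /enorm edotZl edotZr mulrA -expr2 sqrtrM ?sqr_ge0 // sqrtr_sqr.
Qed.

(* Lagrange's identity: the defect in Cauchy-Schwarz is a sum of squares. *)
Lemma edot_sqr_le u v : edot u v ^+ 2 <= edot u u * edot v v.
Proof.
pose lagrange := \sum_(i < d) \sum_(j < d)
  (u ord0 i * v ord0 j - u ord0 j * v ord0 i) ^+ 2.
have lagrange_ge0 : 0 <= lagrange.
  by apply: sumr_ge0 => i _; apply: sumr_ge0 => j _; exact: sqr_ge0.
have lagrangeE : lagrange =
    edot u u * edot v v + edot v v * edot u u - (edot u v * edot u v) *+ 2.
  rewrite /edot !big_distrlr /= -!sumrMnl -big_split -sumrB /=.
  apply: eq_bigr => i _; rewrite -!sumrMnl -big_split -sumrB.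
  by apply: eq_bigr => j _ /=; ring.
move: lagrange_ge0; rewrite lagrangeE [edot v v * _]mulrC -expr2; lra.
Qed.

Lemma normr_edot_le u v : `|edot u v| <= enorm u * enorm v.
Proof.
rewrite -ler_sqr ?nnegrE ?mulr_ge0 ?enorm_ge0 //.
by rewrite exprMn !enorm_sqr real_normK ?num_real // edot_sqr_le.
Qed.

Lemma edot_le_mx_norm u : edot u u <= d%:R * `|u| ^+ 2.
Proof.
apply: (@le_trans _ _ (\sum_(i < d) `|u| ^+ 2)); last first.
  by rewrite sumr_const card_ord mulr_natl.
apply: ler_sum => i _; rewrite -expr2 -real_normK ?num_real //.
rewrite lerXn2r ?nnegrE //; rewrite [X in _ <= X]mx_normrE.
exact: (le_bigmax 0 (fun ij : 'I_1 * 'I_d => `|u ij.1 ij.2|) (ord0, i)).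
Qed.

Lemma compact_enorm_bounded (S : set 'rV[R]_d) :
  compact S -> exists B, forall y z, S y -> S z -> enorm (y - z) <= B.
Proof.
move=> /compact_bounded [M [_ /(_ (`|M| + 1)) HM]].
have {}HM : forall y, S y -> `|y| <= `|M| + 1.
  by apply: HM; have := ler_norm M; lra.
exists (Num.sqrt (d%:R * (2 * (`|M| + 1)) ^+ 2)) => y z Sy Sz.
rewrite ler_sqrt ?mulr_ge0 ?sqr_ge0 //.
apply: le_trans (edot_le_mx_norm _) _; apply: ler_wpM2l => //.
rewrite lerXn2r ?nnegrE //.
apply: le_trans (ler_normB y z) _.
by have := HM y Sy; have := HM z Sz; lra.
Qed.

End EuclideanGeometry.

(* The mean value theorem applied to [phi t - (t phi'(0) + M t^2 / 2)], whose
   derivative is nonpositive on [0, a]. *)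
Lemma le_quadratic_of_derive (R : realType) (phi phi' : R -> R) (M a : R) :
  0 <= a ->
  (forall t, 0 <= t -> t <= a -> is_derive t 1 phi (phi' t)) ->
  (forall t, 0 <= t -> t <= a -> phi' t <= phi' 0 + M * t) ->
  phi a <= phi 0 + a * phi' 0 + M / 2 * a ^+ 2.
Proof.
move=> a_ge0 dphi phi'_le.
have [->|a_neq0] := eqVneq a 0; first by rewrite expr0n /= !(mul0r, mulr0, addr0).
have a_gt0 : 0 < a by rewrite lt_neqAle eq_sym a_neq0.
pose psi t := phi t - (t * phi' 0 + M / 2 * t ^+ 2).
pose psi' t := phi' t - (phi' 0 + M / 2 * (2 * t)).
have dpsi t : 0 <= t -> t <= a -> is_derive t 1 psi (psi' t).
  move=> t0 ta; apply: is_deriveB; first exact: dphi.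
  by apply: is_derive_eq; rewrite scaler0 add0r /GRing.scale /=; ring.
have [c] : exists2 c, c \in `]0, a[ & psi a - psi 0 = psi' c * (a - 0).
  apply: MVT => // [t|].
    by rewrite in_itv /= => /andP[t0 ta]; apply: dpsi; rewrite ltW.
  apply: derivable_within_continuous => t; rewrite in_itv /= => /andP[t0 ta].
  by have [] := dpsi t t0 ta.
rewrite in_itv /= => /andP[c_gt0 c_lt_a] psiE.
have psi'_le0 : psi' c <= 0.
  by have := phi'_le c (ltW c_gt0) (ltW c_lt_a); rewrite /psi'; lra.
have : psi a <= psi 0 by nra.
by rewrite /psi expr0n /= !(mul0r, mulr0, addr0, subr0) => ?; lra.
Qed.

Lemma is_derive_along_line (R : realType) (d : nat) (f : 'rV[R]_d -> R)
    (y v : 'rV[R]_d) (t : R) :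
  differentiable f (y + t *: v) ->
  is_derive t 1 (fun t => f (y + t *: v)) ('d f (y + t *: v) v).
Proof.
move=> df.
have quotE : (fun h : R => h^-1 *: (((fun t => f (y + t *: v)) \o shift t) (h *: 1)
      - f (y + t *: v))) =
    (fun h : R => h^-1 *: ((f \o shift (y + t *: v)) (h *: v) - f (y + t *: v))).
  apply: funext => h /=; congr (_ *: (f _ - _)).
  have -> : h%:A = h :> R by rewrite [LHS]mulr1.
  by rewrite scalerDl addrCA.
apply: DeriveDef; first by rewrite /derivable quotE; exact: diff_derivable.
by rewrite /derive quotE -/(derive f _ v) deriveE.
Qed.

Lemma descent_lemma (R : realType) (d : nat) (f : 'rV[R]_d -> R)
    (grad : 'rV[R]_d -> 'rV[R]_d) (L : R) (y v : 'rV[R]_d) (a : R) :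
  0 <= a ->
  (forall t, 0 <= t -> t <= a -> differentiable f (y + t *: v) /\
     forall h, 'd f (y + t *: v) h = edot (grad (y + t *: v)) h) ->
  (forall t, 0 <= t -> t <= a ->
     enorm (grad (y + t *: v) - grad y) <= L * enorm (t *: v)) ->
  f (y + a *: v) <= f y + a * edot (grad y) v + L * edot v v / 2 * a ^+ 2.
Proof.
move=> a_ge0 df grad_lip.
have := @le_quadratic_of_derive R (fun t => f (y + t *: v))
  (fun t => edot (grad (y + t *: v)) v) (L * edot v v) a a_ge0.
rewrite scale0r addr0 mulrAC; apply.
  move=> t t0 ta; have [dft dfE] := df t t0 ta.
  by rewrite -dfE; exact: is_derive_along_line.
move=> t t0 ta.
have := normr_edot_le (grad (y + t *: v) - grad y) v.
rewrite edotBl => /(le_trans (ler_norm _)) le_lip.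
have : enorm (grad (y + t *: v) - grad y) * enorm v <= L * t * edot v v.
  have -> : L * t * edot v v = L * enorm (t *: v) * enorm v.
    by rewrite enormZ ger0_norm // -enorm_sqr; ring.
  by apply: ler_wpM2r; [exact: enorm_ge0 | exact: grad_lip].
by rewrite mulrAC; lra.
Qed.

Section PosPart.
Variable R : realType.
Implicit Types a b : R.

Lemma pospart_ge0 a : 0 <= pospart a.
Proof. by rewrite /pospart le_max lexx orbT. Qed.

Lemma pospart_le a b : a <= b -> 0 <= b -> pospart a <= b.
Proof. by move=> ab b0; rewrite /pospart ge_max ab. Qed.

Lemma pospartM a : pospart a * a = pospart a ^+ 2.
Proof. by rewrite /pospart expr2 maxElt; case: ifP; rewrite ?mul0r. Qed.

(* The decrease certified by the short step [p / C] in a quadratic upper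
   model with slope [e <= - a] and curvature [q <= C]. *)
Lemma short_step_le a e q C : 0 < C -> e <= - a -> q <= C ->
  pospart a / C * e + q / 2 * (pospart a / C) ^+ 2 <= - (pospart a ^+ 2 / (2 * C)).
Proof.
move=> C_gt0 e_le q_le; have p_ge0 := pospart_ge0 a; have pM := pospartM a.
have al_ge0 : 0 <= pospart a / C by rewrite divr_ge0 // ltW.
have slope : pospart a / C * e <= - (pospart a ^+ 2 / C).
  by apply: le_trans (ler_wpM2l al_ge0 e_le) _; rewrite -pM mulrN mulrAC.
have curv : q / 2 * (pospart a / C) ^+ 2 <= C / 2 * (pospart a / C) ^+ 2.
  by apply: ler_wpM2r; [exact: sqr_ge0 | lra].
have curvE : C / 2 * (pospart a / C) ^+ 2 = pospart a ^+ 2 / (2 * C).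
  by field; rewrite gt_eqF.
have slopeE : pospart a ^+ 2 / C = 2 * (pospart a ^+ 2 / (2 * C)).
  by field; rewrite gt_eqF.
lra.
Qed.

End PosPart.

Lemma convex_segment (R : realType) (d : nat) (S : set 'rV[R]_d) y z t :
  convex_in S -> S y -> S z -> 0 <= t -> t <= 1 -> S (y + t *: (z - y)).
Proof.
move=> cvS Sy Sz t0 t1; have := cvS z y t Sz Sy t0 t1.
by rewrite scalerBr scalerBl scale1r addrCA.
Qed.

Lemma sup_edot_argmin (R : realType) (d : nat) (S : set 'rV[R]_d) g y s :
  S s -> (forall t, S t -> edot g (s - y) <= edot g (t - y)) ->
  sup [set edot g (y - t) | t in S] = - edot g (s - y).
Proof.
move=> Ss s_min.
have edotE t : edot g (y - t) = - edot g (t - y) by rewrite -opprB edotNr.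
have ub : ubound [set edot g (y - t) | t in S] (- edot g (s - y)).
  by move=> _ [t St <-]; rewrite edotE lerN2; exact: s_min.
apply/le_anti/andP; split.
  by apply: ge_sup => //; exists (edot g (y - s)), s.
by apply: ub_le_sup; [exists (- edot g (s - y)) | exists s; rewrite ?edotE].
Qed.

Lemma enorm_le_diam (R : realType) (d : nat) (S : set 'rV[R]_d) y z :
  compact S -> S y -> S z -> enorm (y - z) <= diam S.
Proof.
move=> /compact_enorm_bounded [B HB] Sy Sz.
apply: ub_le_sup; last by exists y => //; exists z.
by exists B => _ [y' Sy' [z' Sz' <-]]; exact: HB.
Qed.

Section FrankWolfeStep.
Variables (R : realType) (d : nat) (S : set 'rV[R]_d).
Variables (f : 'rV[R]_d -> R) (grad : 'rV[R]_d -> 'rV[R]_d) (L C D G delta : R).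
Hypothesis convex_S : convex_in S.
Hypothesis f_diff : forall y, S y -> differentiable f y /\
  forall h, 'd f y h = edot (grad y) h.
Hypothesis grad_lip : forall y z, S y -> S z ->
  enorm (grad y - grad z) <= L * enorm (y - z).
Hypothesis S_diam : forall y z, S y -> S z -> enorm (y - z) <= D.
Hypothesis grad_bound : forall y, S y -> enorm (grad y) <= G.
Hypotheses (C_gt0 : 0 < C) (LD2_le_C : L * D ^+ 2 <= C) (GD_le_C : G * D <= C).

Lemma frank_wolfe_step y gy s :
  S y -> S s -> (forall t, S t -> edot gy (s - y) <= edot gy (t - y)) ->
  (forall t, S t -> `|edot (grad y - gy) (t - y)| <= delta * enorm (grad y)) ->
  let a := sup [set edot gy (y - t) | t in S] - delta * enorm (grad y) in
  S (y + (pospart a / C) *: (s - y)) /\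
  f (y + (pospart a / C) *: (s - y)) <= f y - pospart a ^+ 2 / (2 * C).
Proof.
move=> Sy Ss s_min gy_inexact /=; rewrite (sup_edot_argmin Ss s_min).
have segS t : 0 <= t -> t <= 1 -> S (y + t *: (s - y)).
  by move=> t0 t1; exact: convex_segment.
set v := s - y in segS *; set e := edot (grad y) v.
set a := - edot gy v - delta * enorm (grad y).
have e_le : e <= - a.
  have := gy_inexact s Ss; rewrite edotBl -/e => /(le_trans (ler_norm _)) ?.
  by rewrite /a; lra.
have e_ge : - C <= e.
  have := normr_edot_le (grad y) v; rewrite -/e => e_norm.
  have norm_le : enorm (grad y) * enorm v <= G * D.
    by apply: ler_pM; rewrite ?enorm_ge0 ?grad_bound ?S_diam.
  have e_le_C := le_trans e_norm (le_trans norm_le GD_le_C).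
  by have := ler_norm (- e); rewrite normrN => ?; lra.
have al_ge0 : 0 <= pospart a / C by rewrite divr_ge0 ?pospart_ge0 // ltW.
have al_le1 : pospart a / C <= 1.
  by rewrite ler_pdivrMr // mul1r; apply: pospart_le; [lra | exact: ltW].
split; first exact: segS.
have curv : L * edot v v <= C.
  have vv_le : edot v v <= D ^+ 2.
    rewrite -enorm_sqr lerXn2r ?nnegrE ?S_diam ?enorm_ge0 //.
    exact: le_trans (enorm_ge0 v) (S_diam Ss Sy).
  have [L_ge0|L_lt0] := leP 0 L.
    by apply: le_trans LD2_le_C; exact: ler_wpM2l.
  by apply: le_trans (ltW C_gt0); rewrite nmulr_rle0 ?edot_ge0.
have inseg t : 0 <= t -> t <= pospart a / C -> S (y + t *: v).
  by move=> t0 t1; apply: segS => //; exact: le_trans al_le1.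
have descent : f (y + (pospart a / C) *: v) <=
    f y + pospart a / C * e + L * edot v v / 2 * (pospart a / C) ^+ 2.
  apply: descent_lemma => // t t0 t1; first exact: f_diff (inseg t t0 t1).
  by have := grad_lip (inseg t t0 t1) Sy; rewrite (addrC y) addrK.
by have := short_step_le C_gt0 e_le curv; lra.
Qed.

End FrankWolfeStep.

Theorem lemma3 (R : realType) (d : nat) (S : set 'rV[R]_d)
  (f : 'rV[R]_d -> R) (grad : 'rV[R]_d -> 'rV[R]_d)
  (L C delta : R) (g : 'rV[R]_d -> 'rV[R]_d)
  (x0 : 'rV[R]_d) (x s : nat -> 'rV[R]_d) :
  S !=set0 -> compact S -> convex_in S ->
  (* f differentiable on S with gradient grad *)
  (forall y, S y -> differentiable f y /\
     forall h, ('d f y) h = edot (grad y) h) ->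
  (* L-Lipschitz gradient on S *)
  (forall y z, S y -> S z -> enorm (grad y - grad z) <= L * enorm (y - z)) ->
  (* G < oo *)
  has_ubound [set enorm (grad y) | y in S] ->
  0 < C ->
  L * diam S ^+ 2 <= C ->
  sup [set enorm (grad y) | y in S] * diam S <= C ->
  0 <= delta ->
  (forall y t, S y -> S t ->
     `| edot (grad y - g y) (t - y) | <= delta * enorm (grad y)) ->
  S x0 -> x 0%N = x0 ->
  (forall k, S (s k) /\
     forall t, S t -> edot (g (x k)) (s k - x k) <= edot (g (x k)) (t - x k)) ->
  (forall k, x k.+1 = x k +
     (pospart (sup [set edot (g (x k)) (x k - t) | t in S]
                - delta * enorm (grad (x k))) / C) *: (s k - x k)) ->
  forall k, f (x k.+1) <= f (x k) -
     (pospart (sup [set edot (g (x k)) (x k - t) | t in S]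
                - delta * enorm (grad (x k)))) ^+ 2 / (2 * C).
Proof.
(* Nonemptiness of S follows from S x0, and the step bound holds for any delta. *)
move=> _ cS cvS f_diff grad_lip grad_ub C_gt0 LD2_le_C GD_le_C _ g_inexact.
move=> Sx0 x_0 s_min x_succ.
have S_diam y z : S y -> S z -> enorm (y - z) <= diam S by exact: enorm_le_diam.
have grad_bound y : S y -> enorm (grad y) <= sup [set enorm (grad y) | y in S].
  by move=> Sy; apply: ub_le_sup => //; exists y.
have step k : S (x k) -> S (x k.+1) /\ f (x k.+1) <= f (x k) -
    (pospart (sup [set edot (g (x k)) (x k - t) | t in S]
               - delta * enorm (grad (x k)))) ^+ 2 / (2 * C).
  move=> Sxk; have [Ssk sk_min] := s_min k; rewrite x_succ.
  exact: (frank_wolfe_step cvS f_diff grad_lip S_diam grad_bound C_gt0 LD2_le_C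
    GD_le_C Sxk Ssk sk_min (fun t St => g_inexact _ _ Sxk St)).
have Sx k : S (x k) by elim: k => [|k IH]; [rewrite x_0 | exact: (step k IH).1].
by move=> k; exact: (step k (Sx k)).2.
Qed.
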